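(* Let $\mu_0\cdots\mu_4\neq0$ and suppose $\mu_0+\mu_1+\mu_2-\mu_3-\mu_4\neq0$ and $\mu_0+\mu_3+\mu_4-\mu_1-\mu_2\neq0$. Put $$\alpha=\frac{2\mu_1\mu_2}{\mu_0+\mu_1+\mu_2-\mu_3-\mu_4},\qquad \beta=\frac{2\mu_3\mu_4}{\mu_0+\mu_3+\mu_4-\mu_1-\mu_2},$$ and let $R$ be the quadric in $\mathbb{P}^3$ defined by $$(\mu_1X_2+\mu_2X_1)(\mu_3X_4+\mu_4X_3)+\alpha(\mu_0X_3X_4+\mu_3X_0X_4+\mu_4X_0X_3)+\beta(\mu_0X_1X_2+\mu_1X_0X_2+\mu_2X_0X_1)+\alpha\beta X_0^2 .$$ Then $R$ is always singular (rank $\le 3$ as a quadric on $\mathbb{P}^3$), with singular point $[\mu_1+\mu_2-\mu_3-\mu_4:-\mu_1:-\mu_2:\mu_3:\mu_4]$. Moreover $R$ has rank $\le2$ (i.e. is a union of two planes) if and only if $$\sum_{i=0}^4\mu_i^3-\sum_{i\neq j}\mu_i^2\mu_j+2\sum_{i<j<k}\mu_i\mu_j\mu_k=0.$$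
   Context: $\mathbb{P}^3$ is the hyperplane $\sum_{i=0}^4X_i=0$ in $\mathbb{P}^4$ with homogeneous coordinates $[X_0:\dots:X_4]$, over $\mathbb{C}$. The middle sum runs over ordered pairs of distinct indices, the last over 3-element subsets. *)

From HB Require Import structures.
From mathcomp Require Import all_boot all_order all_algebra.
Set Implicit Arguments. Unset Strict Implicit. Unset Printing Implicit Defensive.
Import Order.TTheory GRing.Theory Num.Theory.
Local Open Scope ring_scope.

(* Homogeneous coordinates X_0..X_4 of P^4 are indexed by 'I_5;
   a point (vector of C^5) is a function 'I_5 -> C. *)
Definition o0 : 'I_5 := @Ordinal 5 0 isT.
Definition o1 : 'I_5 := @Ordinal 5 1 isT.
Definition o2 : 'I_5 := @Ordinal 5 2 isT.
Definition o3 : 'I_5 := @Ordinal 5 3 isT.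
Definition o4 : 'I_5 := @Ordinal 5 4 isT.

Section Defs.
Variable C : numClosedFieldType.

Definition alphaR (mu : 'I_5 -> C) : C :=
  2 * mu o1 * mu o2 / (mu o0 + mu o1 + mu o2 - mu o3 - mu o4).
Definition betaR (mu : 'I_5 -> C) : C :=
  2 * mu o3 * mu o4 / (mu o0 + mu o3 + mu o4 - mu o1 - mu o2).

Definition Rform (mu : 'I_5 -> C) (X : 'I_5 -> C) : C :=
  let a := alphaR mu in let b := betaR mu in
  (mu o1 * X o2 + mu o2 * X o1) * (mu o3 * X o4 + mu o4 * X o3)
  + a * (mu o0 * X o3 * X o4 + mu o3 * X o0 * X o4 + mu o4 * X o0 * X o3)
  + b * (mu o0 * X o1 * X o2 + mu o1 * X o0 * X o2 + mu o2 * X o0 * X o1)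
  + a * b * X o0 ^+ 2.

Definition polar (q : ('I_5 -> C) -> C) (x y : 'I_5 -> C) : C :=
  q (fun i => x i + y i) - q x - q y.

(* P^3 = the hyperplane sum_i X_i = 0 of P^4. *)
Definition inP3 (x : 'I_5 -> C) : Prop := \sum_i x i = 0.

Definition P3basis (k : 'I_4) : 'I_5 -> C :=
  fun i => (i == widen_ord (leqnSn 4) k)%:R - (i == ord_max)%:R.

(* Gram matrix (of the polar form) of q restricted to the hyperplane,
   in the basis above; its rank is the rank of the quadric q on P^3. *)
Definition gramP3 (q : ('I_5 -> C) -> C) : 'M[C]_4 :=
  \matrix_(k, l) polar q (P3basis k) (P3basis l).

Definition rankP3 (q : ('I_5 -> C) -> C) : nat := \rank (gramP3 q).

Definition singular_pointP3 (q : ('I_5 -> C) -> C) (p : 'I_5 -> C) : Prop :=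
  (exists i, p i != 0) /\ inP3 p /\ q p = 0 /\
  (forall w, inP3 w -> polar q p w = 0).

Definition singpt (mu : 'I_5 -> C) : 'I_5 -> C :=
  fun i => [:: mu o1 + mu o2 - mu o3 - mu o4; - mu o1; - mu o2; mu o3; mu o4]`_i.

Definition cubicR (mu : 'I_5 -> C) : C :=
  \sum_(i : 'I_5) mu i ^+ 3
  - \sum_(i : 'I_5) \sum_(j : 'I_5 | j != i) mu i ^+ 2 * mu j
  + 2 * \sum_(i : 'I_5) \sum_(j : 'I_5 | (i < j)%N)
          \sum_(k : 'I_5 | (j < k)%N) mu i * mu j * mu k.

End Defs.

(* Restricted to the hyperplane, the quadric has a 4x4 Gram matrix G. The
   coordinates v of the claimed singular point satisfy v G = 0 by direct
   computation, so G is singular. Since v_3 = mu_3 != 0, the last row and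
   column of G are combinations of the others, so G = P G3 P^T for the leading
   3x3 block G3 and rank G = rank G3; finally det G3 is a nonzero multiple of
   the cubic, namely 4 mu_0 mu_1 mu_2 mu_3^3 mu_4 / (s_1^2 s_2^2) times it,
   where s_1, s_2 are the two denominators of alpha and beta. *)
From HB Require Import structures.
From mathcomp Require Import all_boot all_order all_algebra.
From mathcomp Require Import ring.
Import Order.TTheory GRing.Theory Num.Theory.
Local Open Scope ring_scope.
Set Implicit Arguments. Unset Strict Implicit.

Section RankFacts.
Variable F : fieldType.

Lemma rank_lt_left_kernel n (A : 'M[F]_n) (v : 'rV_n) :
  v != 0 -> v *m A = 0 -> (\rank A < n)%N.
Proof.
move=> nz_v vA0; rewrite ltn_neqAle rank_leq_row andbT.
by apply: contra nz_v => free_A; rewrite -(mulmx_free_eq0 _ free_A) vA0.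
Qed.

Lemma rank_le_pred_det n (A : 'M[F]_n.+1) : (\rank A <= n)%N = (\det A == 0).
Proof.
rewrite -ltnS ltn_neqAle rank_leq_row andbT -/(row_free A).
by rewrite row_free_unit unitmxE unitfE negbK.
Qed.

Lemma mxrank_eq_factors m n p q (A : 'M[F]_(m, n)) (B : 'M[F]_(p, q))
    (P : 'M_(m, p)) (Q : 'M_(q, n)) (P' : 'M_(p, m)) (Q' : 'M_(n, q)) :
  A = P *m B *m Q -> B = P' *m A *m Q' -> \rank A = \rank B.
Proof.
have le_rank_mul3 k l (X : 'M[F]_(k, l)) k' l' (U : 'M_(k', k))
    (V : 'M_(l, l')) :
  (\rank (U *m X *m V) <= \rank X)%N.
  exact: leq_trans (mxrankM_maxl _ _) (mxrankM_maxr _ _).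
move=> defA defB; apply/eqP; rewrite eqn_leq.
by apply/andP; split; [rewrite defA | rewrite defB]; apply: le_rank_mul3.
Qed.

End RankFacts.

Lemma det_mx33 (R : comNzRingType) (f : nat -> nat -> R) :
  \det (\matrix_(i < 3, j < 3) f i j) =
    f 0 0 * (f 1 1 * f 2 2 - f 1 2 * f 2 1)
  - f 0 1 * (f 1 0 * f 2 2 - f 1 2 * f 2 0)
  + f 0 2 * (f 1 0 * f 2 1 - f 1 1 * f 2 0).
Proof.
rewrite (expand_det_row _ 0) !big_ord_recr big_ord0 /= /cofactor.
rewrite !(expand_det_row _ 0) !big_ord_recr !big_ord0 /= /cofactor.
by rewrite !det_mx11 !mxE /= /bump /=; ring.
Qed.

Lemma big_ord5 (V : nmodType) (x : 'I_5 -> V) :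
  \sum_i x i = x o0 + x o1 + x o2 + x o3 + x o4.
Proof.
rewrite !big_ord_recl big_ord0 addr0 !addrA.
by congr (_ + _ + _ + _ + _); congr (x _); apply/val_inj.
Qed.

Lemma big_ord5_cond (V : nmodType) (P : pred 'I_5) (x : 'I_5 -> V) :
  \sum_(i | P i) x i =
    (if P o0 then x o0 else 0) + (if P o1 then x o1 else 0)
  + (if P o2 then x o2 else 0) + (if P o3 then x o3 else 0)
  + (if P o4 then x o4 else 0).
Proof. by rewrite big_mkcond big_ord5. Qed.

Section Quadric.
Variables (C : numClosedFieldType) (mu : 'I_5 -> C).
Hypothesis s1_neq0 : mu o0 + mu o1 + mu o2 - mu o3 - mu o4 != 0.
Hypothesis s2_neq0 : mu o0 + mu o3 + mu o4 - mu o1 - mu o2 != 0.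
Hypothesis mu3_neq0 : mu o3 != 0.

Definition gram_entry (a b : C) (k l : nat) : C :=
  let m0 := mu o0 in let m1 := mu o1 in let m2 := mu o2 in
  let m3 := mu o3 in let m4 := mu o4 in
  match k, l with
  | 0, 0 => 2 * a * b - 2 * a * m3
  | 0, 1 | 1, 0 => b * m2 - a * m3 - m2 * m3
  | 0, 2 | 2, 0 => b * m1 - a * m3 - m1 * m3
  | 0, 3 | 3, 0 => a * m4 - a * m3 - a * m0
  | 1, 1 => -2 * m2 * m3
  | 1, 2 | 2, 1 => b * m0 - m2 * m3 - m1 * m3
  | 1, 3 | 3, 1 => m2 * m4 - m2 * m3 - a * m0
  | 2, 2 => -2 * m1 * m3
  | 2, 3 | 3, 2 => m1 * m4 - m1 * m3 - a * m0
  | 3, 3 => -2 * a * m0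
  | _, _ => 0
  end.

Local Notation gij := (gram_entry (alphaR mu) (betaR mu)).

Lemma gramP3_Rform : gramP3 (Rform mu) = \matrix_(k < 4, l < 4) gij k l.
Proof.
apply/matrixP=> k l; rewrite !mxE /polar /Rform /P3basis.
by case: k => [[|[|[|[|k]]]] ?] //; case: l => [[|[|[|[|l]]]] ?] //=; ring.
Qed.

(* Coordinates of [singpt mu] in the basis [P3basis]. *)
Definition singrow : 'rV[C]_4 := \row_k singpt mu (widen_ord (leqnSn 4) k).

Lemma singrow_neq0 : singrow != 0.
Proof.
apply: contra mu3_neq0 => /eqP/matrixP/(_ 0 ord_max).
by rewrite !mxE /singpt /= => /eqP.
Qed.

Lemma singrow_gramP3 : singrow *m gramP3 (Rform mu) = 0.
Proof.
apply/matrixP=> i j; rewrite gramP3_Rform !mxE !big_ord_recr big_ord0 /= !mxE.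
rewrite /singpt /alphaR /betaR.
by case: j => [[|[|[|[|j]]]] ?] //=; field; rewrite ?s1_neq0 ?s2_neq0.
Qed.

Lemma singular_point_Rform : singular_pointP3 (Rform mu) (singpt mu).
Proof.
split; first by exists o3.
split; first by rewrite /inP3 big_ord5 /singpt /=; ring.
split.
  by rewrite /Rform /singpt /alphaR /betaR /=; field; rewrite s1_neq0 s2_neq0.
move=> w; rewrite /inP3 big_ord5 => /eqP; rewrite addrC addr_eq0 => /eqP w4E.
rewrite /polar /Rform /singpt /= w4E /alphaR /betaR.
by field; rewrite s1_neq0 s2_neq0.
Qed.

Definition leading_mx : 'M[C]_(3, 4) := \matrix_(i, j) ((i : nat) == j)%:R.

(* Since [singrow *m G = 0] and its last entry is [mu o3 != 0], the last row
   of [G] is the combination of the first three with these coefficients. *)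
Definition extend_mx : 'M[C]_(4, 3) :=
  \matrix_(i, j) if (i : nat) == 3%N
                 then - singrow 0 (widen_ord (leqnSn 3) j) / mu o3
                 else ((i : nat) == j)%:R.

Lemma gram3_leading a b :
  \matrix_(i < 3, j < 3) gram_entry a b i j
  = leading_mx *m (\matrix_(k < 4, l < 4) gram_entry a b k l) *m leading_mx^T.
Proof.
apply/matrixP=> i j; rewrite !mxE !big_ord_recr big_ord0 /= !mxE.
rewrite !big_ord_recr big_ord0 /= !mxE /=.
by case: i => [[|[|[|i]]] ?] //; case: j => [[|[|[|j]]] ?] //=;
  rewrite ?big_ord0; ring.
Qed.

Lemma gram_extend :
  \matrix_(k < 4, l < 4) gij k l
  = extend_mx *m (\matrix_(i < 3, j < 3) gij i j) *m extend_mx^T.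
Proof.
apply/matrixP=> i j; rewrite !mxE !big_ord_recr big_ord0 /= !mxE.
rewrite !big_ord_recr big_ord0 /= !mxE /= /singpt /alphaR /betaR.
case: i => [[|[|[|[|i]]]] ?] //; case: j => [[|[|[|[|j]]]] ?] //=.
all: by rewrite ?big_ord0; field; rewrite ?s1_neq0 ?s2_neq0 ?mu3_neq0.
Qed.

Lemma rankP3_Rform : rankP3 (Rform mu) = \rank (\matrix_(i < 3, j < 3) gij i j).
Proof.
rewrite /rankP3 gramP3_Rform.
exact: mxrank_eq_factors gram_extend (gram3_leading _ _).
Qed.

Lemma det_gram3 :
  \det (\matrix_(i < 3, j < 3) gij i j)
  = 4 * mu o0 * mu o1 * mu o2 * mu o3 ^+ 3 * mu o4
    / ((mu o0 + mu o1 + mu o2 - mu o3 - mu o4) ^+ 2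
       * (mu o0 + mu o3 + mu o4 - mu o1 - mu o2) ^+ 2)
    * cubicR mu.
Proof.
rewrite det_mx33 /gram_entry /cubicR !big_ord5 !big_ord5_cond /= /alphaR /betaR.
by field; rewrite s1_neq0 s2_neq0.
Qed.

End Quadric.

Unset Implicit Arguments.

Theorem proposition8 (C : numClosedFieldType) (mu : 'I_5 -> C) :
  \prod_i mu i != 0 ->
  mu o0 + mu o1 + mu o2 - mu o3 - mu o4 != 0 ->
  mu o0 + mu o3 + mu o4 - mu o1 - mu o2 != 0 ->
  [/\ (rankP3 (Rform mu) <= 3)%N,
      singular_pointP3 (Rform mu) (singpt mu)
    & (rankP3 (Rform mu) <= 2)%N <-> cubicR mu = 0].
Proof.
move=> /prodf_neq0 mu_neq0 s1_neq0 s2_neq0.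
have mu3_neq0 := mu_neq0 o3 isT.
split.
- rewrite -ltnS; apply: rank_lt_left_kernel (singrow_neq0 mu3_neq0) _.
  exact: singrow_gramP3.
- exact: singular_point_Rform.
have factor_neq0 : 4 * mu o0 * mu o1 * mu o2 * mu o3 ^+ 3 * mu o4
    / ((mu o0 + mu o1 + mu o2 - mu o3 - mu o4) ^+ 2
       * (mu o0 + mu o3 + mu o4 - mu o1 - mu o2) ^+ 2) != 0.
  by rewrite !(mulf_neq0, invr_neq0, expf_neq0, mu_neq0) ?pnatr_eq0.
rewrite (rankP3_Rform s1_neq0 s2_neq0 mu3_neq0) rank_le_pred_det.
by rewrite det_gram3 // mulf_eq0 (negbTE factor_neq0); split=> /eqP.
Qed.
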